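(* Let $(u,\rho)$ be a smooth solution on $[0,T)$ of the CH2 system on $S_1=\mathbb{R}/2\pi\mathbb{Z}$ (coordinate $\theta$) $$\partial_t m+u\,\partial_\theta m+2m\,\partial_\theta u=-\rho\,\partial_\theta\rho,\qquad m=u-\tfrac14\partial_{\theta\theta}u,\qquad \partial_t\rho+\partial_\theta(\rho u)=0 .$$ Let $N=S_1\times\mathbb{R}_{>0}\times S_1\times S_1$ with coordinates $(\theta,r,y,z)$ (the second circle being $\mathbb{R}/\mathbb{Z}$ in $y$) and metric $$h=r^2(\mathrm{d}\theta)^2+(\mathrm{d}r)^2+r^2(\mathrm{d}y)^2+r^{-10}(\mathrm{d}z)^2 ,$$ and define $$v(t,\theta,r,y,z)=u(t,\theta)\,\partial_\theta+\rho(t,\theta)\,\partial_y+\tfrac{r}{2}\,\partial_\theta u(t,\theta)\,\partial_r .$$ Then there exists a pressure $p$ on $[0,T)\times N$ such that $\partial_t v+\nabla_v v=-\nabla p$ and $\operatorname{div}_h v=0$, i.e. $v$ solves the incompressible Euler equation on $(N,h)$.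
   Context: $\nabla$ is the Levi-Civita connection of $h$, $\nabla p$ the $h$-gradient, $\operatorname{div}_h$ the divergence with respect to the Riemannian volume form of $h$. *)

From Stdlib Require Import Reals Classical ClassicalEpsilon.
Open Scope R_scope.

(* A point of (space)time in coordinates: only finitely many coordinates are
   used.  Convention for spacetime [0,T) x N :
     index 0 = t, 1 = theta, 2 = r, 3 = y, 4 = z.
   Spatial index i (0..3, i.e. theta, r, y, z) is coordinate (S i). *)
Definition pt := nat -> R.

Definition upd (x : pt) (k : nat) (s : R) : pt :=
  fun i => if Nat.eqb i k then s else x i.

Definition is_pderiv (f : pt -> R) (k : nat) (x : pt) (l : R) : Prop :=
  derivable_pt_lim (fun s => f (upd x k s)) (x k) l.

(* total partial derivative operator (meaningful where the derivative exists) *)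
Definition pd (f : pt -> R) (k : nat) (x : pt) : R :=
  epsilon (inhabits 0) (fun l => is_pderiv f k x l).

Definition cont_at (n : nat) (D : pt -> Prop) (f : pt -> R) (x : pt) : Prop :=
  forall eps, 0 < eps -> exists delta, 0 < delta /\
    forall y, D y -> (forall i, (i < n)%nat -> Rabs (y i - x i) < delta) ->
      (forall i, (n <= i)%nat -> y i = x i) -> Rabs (f y - f x) < eps.

CoInductive smooth_on (n : nat) (D : pt -> Prop) (f : pt -> R) : Prop :=
  smooth_intro :
    (forall x, D x -> cont_at n D f x) ->
    (forall k, (k < n)%nat -> exists g : pt -> R,
        (forall x, D x -> is_pderiv f k x (g x)) /\ smooth_on n D g) ->
    smooth_on n D f.

Definition sum4 (F : nat -> R) : R := F 0%nat + F 1%nat + F 2%nat + F 3%nat.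

(* Diagonal Riemannian metric on a 4-dim coordinate chart, g i = g_{ii}. *)
Definition metric_comp (g : nat -> pt -> R) (i j : nat) : pt -> R :=
  fun X => if Nat.eqb i j then g i X else 0.

Definition christoffel (g : nat -> pt -> R) (k i j : nat) (X : pt) : R :=
  / (2 * g k X) *
  (pd (metric_comp g j k) (S i) X + pd (metric_comp g i k) (S j) X
   - pd (metric_comp g i j) (S k) X).

Definition cov_deriv (g : nat -> pt -> R) (W V : nat -> pt -> R) (k : nat) (X : pt) : R :=
  sum4 (fun i => W i X * pd (V k) (S i) X)
  + sum4 (fun i => sum4 (fun j => christoffel g k i j X * W i X * V j X)).

Definition grad (g : nat -> pt -> R) (p : pt -> R) (k : nat) (X : pt) : R :=
  / g k X * pd p (S k) X.

Definition vol_density (g : nat -> pt -> R) (X : pt) : R :=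
  sqrt (g 0%nat X * g 1%nat X * g 2%nat X * g 3%nat X).

Definition div_g (g : nat -> pt -> R) (V : nat -> pt -> R) (X : pt) : R :=
  / vol_density g X *
  sum4 (fun i => pd (fun Y => vol_density g Y * V i Y) (S i) X).

Definition h (i : nat) (X : pt) : R :=
  match i with
  | 0%nat => (X 2%nat) ^ 2
  | 1%nat => 1
  | 2%nat => (X 2%nat) ^ 2
  | _ => / (X 2%nat) ^ 10
  end.

Definition lift2 (f : R -> R -> R) : pt -> R := fun X => f (X 0%nat) (X 1%nat).

Definition mom (u : R -> R -> R) : pt -> R :=
  fun X => lift2 u X - / 4 * pd (pd (lift2 u) 1%nat) 1%nat X.

Definition vfield (u rho : R -> R -> R) (i : nat) : pt -> R :=
  match i with
  | 0%nat => lift2 u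
  | 1%nat => fun X => X 2%nat / 2 * pd (lift2 u) 1%nat X
  | 2%nat => lift2 rho
  | _ => fun _ => 0
  end.

(* The pressure is p = r^2 P(t, theta) with
   P = (u^2 + rho^2)/2 - (u_{t theta} + u u_{theta theta} + u_theta^2/2)/4.
   Since h depends only on r, the Christoffel symbols that meet v are
   Gamma^theta_{theta r} = Gamma^y_{y r} = 1/r and Gamma^r_{theta theta} = Gamma^r_{y y} = -r,
   so the theta-, r-, y- and z-components of d_t v + nabla_v v are
     u_t + 2 u u_theta,   (r/2)(u_{t theta} + u u_{theta theta} + u_theta^2/2) - r (u^2 + rho^2),
     rho_t + (rho u)_theta   and   0.
   The r-component is -d_r p by the choice of P, the theta-component is -P_theta by the CH
   momentum equation (once d_t and d_theta are commuted), and the y-component vanishes by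
   the continuity equation.  The volume density is r^-3, so
   div v = u_theta + r^3 d_r (u_theta / (2 r^2)) = 0.
   p is smooth because it is a polynomial in r and in (t, theta)-derivatives of u and rho. *)

From Coquelicot Require Import Coquelicot.
From Stdlib Require Import Reals Classical ClassicalEpsilon FunctionalExtensionality PropExtensionality Lra Lia.
Open Scope R_scope.

Lemma epsilon_derivable_pt_lim (f : R -> R) (x l : R) :
  derivable_pt_lim f x l -> epsilon (inhabits 0) (fun l => derivable_pt_lim f x l) = l.
Proof.
  intros Hl. apply (uniqueness_limite f x); [|exact Hl].
  apply (epsilon_spec (inhabits 0) (fun l => derivable_pt_lim f x l)). eauto.
Qed.

Lemma pd_eq (f : pt -> R) (k : nat) (x : pt) (l : R) : is_pderiv f k x l -> pd f k x = l.
Proof. apply epsilon_derivable_pt_lim. Qed.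

Lemma pd_const (f : pt -> R) (k : nat) (x : pt) (c : R) : (forall s, f (upd x k s) = c) -> pd f k x = 0.
Proof.
  intros Hc. apply pd_eq. apply (derivable_pt_lim_ext (fct_cte c)); [easy|].
  apply derivable_pt_lim_const.
Qed.

Lemma upd_same (x : pt) (k : nat) (s : R) : upd x k s k = s.
Proof. unfold upd. now rewrite Nat.eqb_refl. Qed.

Lemma upd_id (x : pt) (k : nat) : upd x k (x k) = x.
Proof.
  apply functional_extensionality; intros i. unfold upd.
  destruct (Nat.eqb_spec i k); subst; auto.
Qed.

Lemma cont_at_add (n : nat) (D : pt -> Prop) (f g : pt -> R) (x : pt) :
  cont_at n D f x -> cont_at n D g x -> cont_at n D (fun y => f y + g y) x.
Proof.
  intros Hf Hg eps He.
  destruct (Hf (eps/2) ltac:(lra)) as [d1 [Hd1 H1]].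
  destruct (Hg (eps/2) ltac:(lra)) as [d2 [Hd2 H2]].
  exists (Rmin d1 d2). split; [now apply Rmin_pos|].
  intros y Dy Hy Hy'.
  assert (A1 := H1 y Dy (fun i Hi => Rlt_le_trans _ _ _ (Hy i Hi) (Rmin_l _ _)) Hy').
  assert (A2 := H2 y Dy (fun i Hi => Rlt_le_trans _ _ _ (Hy i Hi) (Rmin_r _ _)) Hy').
  replace (f y + g y - (f x + g x)) with ((f y - f x) + (g y - g x)) by ring.
  eapply Rle_lt_trans; [apply Rabs_triang | lra].
Qed.

Lemma cont_at_mul (n : nat) (D : pt -> Prop) (f g : pt -> R) (x : pt) :
  cont_at n D f x -> cont_at n D g x -> cont_at n D (fun y => f y * g y) x.
Proof.
  intros Hf Hg eps He.
  set (a := f x). set (b := g x).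
  assert (Pa : 0 < Rabs a + 1) by (pose proof (Rabs_pos a); lra).
  assert (Pb : 0 < Rabs b + 1) by (pose proof (Rabs_pos b); lra).
  set (e1 := Rmin 1 (eps / (2 * (Rabs b + 1)))).
  set (e2 := eps / (2 * (Rabs a + 1))).
  assert (He1 : 0 < e1) by (apply Rmin_pos; [lra | apply Rdiv_lt_0_compat; lra]).
  assert (He2 : 0 < e2) by (apply Rdiv_lt_0_compat; lra).
  destruct (Hf e1 He1) as [d1 [Hd1 H1]].
  destruct (Hg e2 He2) as [d2 [Hd2 H2]].
  exists (Rmin d1 d2). split; [now apply Rmin_pos|].
  intros y Dy Hy Hy'.
  assert (A1 := H1 y Dy (fun i Hi => Rlt_le_trans _ _ _ (Hy i Hi) (Rmin_l _ _)) Hy').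
  assert (A2 := H2 y Dy (fun i Hi => Rlt_le_trans _ _ _ (Hy i Hi) (Rmin_r _ _)) Hy').
  fold a in A1. fold b in A2.
  replace (f y * g y - a * b) with (f y * (g y - b) + b * (f y - a)) by ring.
  eapply Rle_lt_trans; [apply Rabs_triang|]. rewrite !Rabs_mult.
  assert (Fy : Rabs (f y) < Rabs a + 1).
  { assert (e1 <= 1) by apply Rmin_l. pose proof (Rabs_triang_inv (f y) a). lra. }
  assert (B1 : Rabs (f y) * Rabs (g y - b) <= (Rabs a + 1) * e2)
    by (apply Rmult_le_compat; try apply Rabs_pos; lra).
  assert (B2 : Rabs b * Rabs (f y - a) <= Rabs b * e1)
    by (apply Rmult_le_compat_l; [apply Rabs_pos | lra]).
  assert (B3 : Rabs b * e1 < eps / 2).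
  { assert (e1 <= eps / (2 * (Rabs b + 1))) by apply Rmin_r.
    apply Rle_lt_trans with (Rabs b * (eps / (2 * (Rabs b + 1)))).
    - apply Rmult_le_compat_l; [apply Rabs_pos | lra].
    - apply Rmult_lt_reg_r with (2 * (Rabs b + 1)); [lra|].
      field_simplify; lra. }
  assert (B4 : (Rabs a + 1) * e2 = eps / 2) by (unfold e2; field; lra).
  lra.
Qed.

Lemma smooth_on_ext (n : nat) (D : pt -> Prop) (f g : pt -> R) :
  (forall x k, D x -> (k < n)%nat ->
     exists a b, a < x k < b /\ forall s, a < s < b -> D (upd x k s)) ->
  (forall x, D x -> f x = g x) ->
  smooth_on n D f -> smooth_on n D g.
Proof.
  intros Dopen E [Hc Hd]. constructor.
  - intros x Dx eps He. destruct (Hc x Dx eps He) as [d [Hd0 Hd1]].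
    exists d; split; auto. intros y Dy H1 H2. rewrite <- !E; auto.
  - intros k Hk. destruct (Hd k Hk) as [f' [Hf' Hs]]. exists f'; split; auto.
    intros x Dx. destruct (Dopen x k Dx Hk) as [a [b [Hab Hab']]].
    apply derivable_pt_lim_locally_ext with (f := fun s => f (upd x k s)) (a := a) (b := b); auto.
    now apply Hf'.
Qed.

(* Partial derivatives of functions of (t, theta); like [pd], they are junk where the
   derivative does not exist. *)
Definition dt (w : R -> R -> R) (t th : R) : R :=
  epsilon (inhabits 0) (fun l => derivable_pt_lim (fun s => w s th) t l).

Definition dth (w : R -> R -> R) (t th : R) : R :=
  epsilon (inhabits 0) (fun l => derivable_pt_lim (fun s => w t s) th l).

Lemma pd_lift2_theta (w : R -> R -> R) : pd (lift2 w) 1 = lift2 (dth w).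
Proof. reflexivity. Qed.

Definition point2 (t th : R) : pt := fun i => match i with 0%nat => t | 1%nat => th | _ => 0 end.

Section Smooth2.
Variable T : R.

Definition time_slab (X : pt) : Prop := 0 < X 0%nat < T.

Definition smooth2 (w : R -> R -> R) : Prop := smooth_on 2 time_slab (lift2 w).

Lemma time_slab_open (x : pt) (k : nat) : time_slab x -> (k < 2)%nat ->
  exists a b, a < x k < b /\ forall s, a < s < b -> time_slab (upd x k s).
Proof.
  intros Hx Hk. destruct k as [|[|k]]; [| |lia].
  - exists 0, T. split; [exact Hx | easy].
  - exists (x 1%nat - 1), (x 1%nat + 1). split; [lra | easy].
Qed.

Lemma dt_derivable (w : R -> R -> R) (t th : R) : smooth2 w -> 0 < t < T ->
  derivable_pt_lim (fun s => w s th) t (dt w t th).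
Proof.
  intros [_ Hd] Ht. destruct (Hd 0%nat ltac:(lia)) as [g [Hg _]].
  specialize (Hg (point2 t th) Ht).
  change (derivable_pt_lim (fun s => w s th) t (g (point2 t th))) in Hg.
  unfold dt. now rewrite (epsilon_derivable_pt_lim _ _ _ Hg).
Qed.

Lemma dth_derivable (w : R -> R -> R) (t th : R) : smooth2 w -> 0 < t < T ->
  derivable_pt_lim (fun s => w t s) th (dth w t th).
Proof.
  intros [_ Hd] Ht. destruct (Hd 1%nat ltac:(lia)) as [g [Hg _]].
  specialize (Hg (point2 t th) Ht).
  change (derivable_pt_lim (fun s => w t s) th (g (point2 t th))) in Hg.
  unfold dth. now rewrite (epsilon_derivable_pt_lim _ _ _ Hg).
Qed.

Lemma smooth2_pd (w : R -> R -> R) (k : nat) : smooth2 w -> (k < 2)%nat ->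
  smooth_on 2 time_slab (pd (lift2 w) k).
Proof.
  intros Hw Hk. pose proof Hw as [_ Hd]. destruct (Hd k Hk) as [g [Hg Hs]].
  apply (smooth_on_ext _ _ g); [exact time_slab_open | | exact Hs].
  intros x Dx. symmetry. now apply pd_eq, Hg.
Qed.

Lemma smooth2_dt (w : R -> R -> R) : smooth2 w -> smooth2 (dt w).
Proof. intros Hw. exact (smooth2_pd w 0 Hw ltac:(lia)). Qed.

Lemma smooth2_dth (w : R -> R -> R) : smooth2 w -> smooth2 (dth w).
Proof. intros Hw. exact (smooth2_pd w 1 Hw ltac:(lia)). Qed.

Lemma smooth2_cont (w : R -> R -> R) (t th : R) : smooth2 w -> 0 < t < T ->
  forall eps, 0 < eps -> exists d, 0 < d /\ forall a b, 0 < a < T ->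
    Rabs (a - t) < d -> Rabs (b - th) < d -> Rabs (w a b - w t th) < eps.
Proof.
  intros [Hc _] Ht eps He. destruct (Hc (point2 t th) Ht eps He) as [d [Hd H]].
  exists d; split; [exact Hd|]. intros a b Ha H1 H2.
  apply (H (point2 a b) Ha); intros [|[|i]] Hi; cbn; auto; lia.
Qed.

Lemma Derive_dt (w : R -> R -> R) (t th : R) : smooth2 w -> 0 < t < T ->
  Derive (fun s => w s th) t = dt w t th.
Proof. intros Hw Ht. apply is_derive_unique, is_derive_Reals, dt_derivable; auto. Qed.

Lemma Derive_dth (w : R -> R -> R) (t th : R) : smooth2 w -> 0 < t < T ->
  Derive (fun s => w t s) th = dth w t th.
Proof. intros Hw Ht. apply is_derive_unique, is_derive_Reals, dth_derivable; auto. Qed.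

Lemma Derive_dth_derivable (w : R -> R -> R) (t th : R) : smooth2 w -> 0 < t < T ->
  derivable_pt_lim (fun s => Derive (fun z => w s z) th) t (dt (dth w) t th).
Proof.
  intros Hw Ht.
  apply derivable_pt_lim_locally_ext with (f := fun s => dth w s th) (a := 0) (b := T); [easy| |].
  - intros s Hs. symmetry. now apply Derive_dth.
  - apply dt_derivable; [now apply smooth2_dth | easy].
Qed.

Lemma Derive_dt_derivable (w : R -> R -> R) (t th : R) : smooth2 w -> 0 < t < T ->
  derivable_pt_lim (fun s => Derive (fun z => w z s) t) th (dth (dt w) t th).
Proof.
  intros Hw Ht. apply (derivable_pt_lim_ext (fun s => dt w t s)).
  - intros s. symmetry. now apply Derive_dt.
  - apply dth_derivable; [now apply smooth2_dt | easy].
Qed.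

Lemma continuity_2d_pt_of_smooth2 (f g : R -> R -> R) (t th : R) : smooth2 g -> 0 < t < T ->
  (forall a b, 0 < a < T -> f a b = g a b) ->
  continuity_2d_pt f t th.
Proof.
  intros Hg Ht E eps.
  destruct (smooth2_cont g t th Hg Ht eps (cond_pos eps)) as [d [Hd Hc]].
  assert (Hm : 0 < Rmin d (Rmin t (T - t))) by (repeat apply Rmin_pos; lra).
  exists (mkposreal _ Hm). intros a b Ha Hb. cbn in Ha, Hb.
  pose proof (Rmin_l d (Rmin t (T - t))). pose proof (Rmin_r d (Rmin t (T - t))).
  pose proof (Rmin_l t (T - t)). pose proof (Rmin_r t (T - t)).
  assert (Ia : 0 < a < T) by (apply Rabs_def2 in Ha; lra).
  rewrite !E by easy. apply Hc; [easy | lra | lra].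
Qed.

Lemma dt_dth_comm (w : R -> R -> R) (t th : R) : smooth2 w -> 0 < t < T ->
  dth (dt w) t th = dt (dth w) t th.
Proof.
  intros Hw Ht.
  assert (E1 : Derive (fun s => Derive (fun z => w s z) th) t = dt (dth w) t th)
    by now apply is_derive_unique, is_derive_Reals, Derive_dth_derivable.
  assert (E2 : Derive (fun s => Derive (fun z => w z s) t) th = dth (dt w) t th)
    by now apply is_derive_unique, is_derive_Reals, Derive_dt_derivable.
  rewrite <- E1, <- E2. symmetry. apply Schwarz.
  - assert (Hd : 0 < Rmin t (T - t)) by (apply Rmin_pos; lra).
    exists (mkposreal _ Hd). intros a b Ha _. cbn in Ha.
    pose proof (Rmin_l t (T - t)). pose proof (Rmin_r t (T - t)).
    assert (Ia : 0 < a < T) by (apply Rabs_def2 in Ha; lra).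
    repeat split; eexists; apply is_derive_Reals.
    + now apply dt_derivable.
    + now apply dth_derivable.
    + now apply Derive_dth_derivable.
    + now apply Derive_dt_derivable.
  - apply (continuity_2d_pt_of_smooth2 _ (dt (dth w))); [now apply smooth2_dt, smooth2_dth | easy |].
    intros a b Ha. apply is_derive_unique, is_derive_Reals. now apply Derive_dth_derivable.
  - apply (continuity_2d_pt_of_smooth2 _ (dth (dt w))); [now apply smooth2_dth, smooth2_dt | easy |].
    intros a b Ha. apply is_derive_unique, is_derive_Reals. now apply Derive_dt_derivable.
Qed.

End Smooth2.

Definition theta_periodic (w : R -> R -> R) : Prop :=
  forall t th, w t (th + 2 * PI) = w t th.

Lemma derivable_pt_lim_periodic (f : R -> R) (c x l : R) : (forall s, f (s + c) = f s) ->
  derivable_pt_lim f (x + c) l <-> derivable_pt_lim f x l.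
Proof.
  intros Hf. split; intros H eps He; destruct (H eps He) as [d Hd]; exists d;
    intros hh H1 H2; specialize (Hd hh H1 H2);
    replace (x + c + hh) with ((x + hh) + c) in * by ring; rewrite !Hf in *; exact Hd.
Qed.

Lemma theta_periodic_dth (w : R -> R -> R) : theta_periodic w -> theta_periodic (dth w).
Proof.
  intros Hw t th. unfold dth. f_equal. apply functional_extensionality; intros l.
  apply propositional_extensionality, derivable_pt_lim_periodic. intros; apply Hw.
Qed.

Lemma theta_periodic_dt (w : R -> R -> R) : theta_periodic w -> theta_periodic (dt w).
Proof.
  intros Hw t th. unfold dt.
  replace (fun s => w s (th + 2 * PI)) with (fun s => w s th); [easy|].
  apply functional_extensionality; intros s. now rewrite Hw.
Qed.

Lemma lift2_upd_high (w : R -> R -> R) (x : pt) (k : nat) (s : R) :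
  (2 <= k)%nat -> lift2 w (upd x k s) = lift2 w x.
Proof.
  intros Hk. unfold lift2, upd.
  now rewrite (proj2 (Nat.eqb_neq 0 k)), (proj2 (Nat.eqb_neq 1 k)) by lia.
Qed.

(* Polynomials in the coordinates and in functions of (t, theta); the syntax makes
   them closed under partial differentiation, which gives smoothness by coinduction. *)
Inductive expr : Type :=
  | EFun (w : R -> R -> R)
  | ECoord (i : nat)
  | EConst (c : R)
  | EAdd (a b : expr)
  | EMul (a b : expr).

Fixpoint eval (e : expr) (X : pt) : R :=
  match e with
  | EFun w => lift2 w X
  | ECoord i => X i
  | EConst c => c
  | EAdd a b => eval a X + eval b X
  | EMul a b => eval a X * eval b X
  end.

Fixpoint expr_pd (e : expr) (k : nat) : expr :=
  match e with
  | EFun w => match k with 0%nat => EFun (dt w) | 1%nat => EFun (dth w) | _ => EConst 0 end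
  | ECoord i => EConst (if Nat.eqb i k then 1 else 0)
  | EConst _ => EConst 0
  | EAdd a b => EAdd (expr_pd a k) (expr_pd b k)
  | EMul a b => EAdd (EMul (expr_pd a k) b) (EMul a (expr_pd b k))
  end.

Section ExprSmooth.
Variable T : R.

Fixpoint expr_smooth (e : expr) : Prop :=
  match e with
  | EFun w => smooth2 T w
  | EAdd a b | EMul a b => expr_smooth a /\ expr_smooth b
  | _ => True
  end.

Lemma expr_smooth_pd (e : expr) (k : nat) : expr_smooth e -> expr_smooth (expr_pd e k).
Proof.
  induction e; cbn; try tauto.
  destruct k as [|[|k]]; cbn; auto using smooth2_dt, smooth2_dth.
Qed.

Lemma is_pderiv_eval (e : expr) (k : nat) (x : pt) :
  expr_smooth e -> time_slab T x -> is_pderiv (eval e) k x (eval (expr_pd e k) x).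
Proof.
  intros He Hx. unfold is_pderiv. induction e; cbn [expr_smooth eval expr_pd] in He |- *.
  - destruct k as [|[|k]].
    + change (derivable_pt_lim (fun s => w s (x 1%nat)) (x 0%nat) (dt w (x 0%nat) (x 1%nat))).
      now apply (dt_derivable T).
    + change (derivable_pt_lim (fun s => w (x 0%nat) s) (x 1%nat) (dth w (x 0%nat) (x 1%nat))).
      now apply (dth_derivable T).
    + apply (derivable_pt_lim_ext (fct_cte (lift2 w x))).
      * intros s. symmetry. apply lift2_upd_high. lia.
      * apply derivable_pt_lim_const.
  - unfold upd. destruct (Nat.eqb i k).
    + apply derivable_pt_lim_id.
    + apply derivable_pt_lim_const.
  - apply derivable_pt_lim_const.
  - exact (derivable_pt_lim_plus _ _ _ _ _ (IHe1 (proj1 He)) (IHe2 (proj2 He))).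
  - pose proof (derivable_pt_lim_mult _ _ _ _ _ (IHe1 (proj1 He)) (IHe2 (proj2 He))) as Hm.
    cbn in Hm. now rewrite !upd_id in Hm.
Qed.

Lemma pd_eval (e : expr) (k : nat) (x : pt) :
  expr_smooth e -> time_slab T x -> pd (eval e) k x = eval (expr_pd e k) x.
Proof. intros; now apply pd_eq, is_pderiv_eval. Qed.

Section Domain.
Variables (n : nat) (D : pt -> Prop).
Hypothesis n_ge2 : (2 <= n)%nat.
Hypothesis D_slab : forall x, D x -> time_slab T x.

Lemma eval_cont (e : expr) (x : pt) : expr_smooth e -> D x -> cont_at n D (eval e) x.
Proof.
  intros He Dx. induction e; cbn in He.
  - intros eps Heps.
    destruct (smooth2_cont T w (x 0%nat) (x 1%nat) He (D_slab x Dx) eps Heps) as [d [Hd Hc]].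
    exists d; split; [exact Hd|]. intros y Dy H1 _.
    apply Hc; [exact (D_slab y Dy) | apply H1; lia | apply H1; lia].
  - intros eps Heps. exists eps; split; [exact Heps|]. intros y _ H1 H2. cbn.
    destruct (Nat.lt_ge_cases i n) as [Hi | Hi]; [now apply H1|].
    rewrite H2, Rminus_diag, Rabs_R0 by exact Hi. exact Heps.
  - intros eps Heps. exists 1; split; [lra|]. intros; cbn. now rewrite Rminus_diag, Rabs_R0.
  - apply cont_at_add; tauto.
  - apply cont_at_mul; tauto.
Qed.

CoFixpoint smooth_on_eval (e : expr) : expr_smooth e -> smooth_on n D (eval e).
Proof.
  intros He. constructor.
  - intros x Dx. now apply eval_cont.
  - intros k Hk. exists (eval (expr_pd e k)). split.
    + intros x Dx. apply is_pderiv_eval; auto.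
    + apply smooth_on_eval, expr_smooth_pd, He.
Qed.

End Domain.
End ExprSmooth.

Fixpoint expr_theta_periodic (e : expr) : Prop :=
  match e with
  | EFun w => theta_periodic w
  | ECoord i => i <> 1%nat
  | EAdd a b | EMul a b => expr_theta_periodic a /\ expr_theta_periodic b
  | EConst _ => True
  end.

Lemma eval_theta_periodic (e : expr) (X : pt) :
  expr_theta_periodic e -> eval e (upd X 1 (X 1%nat + 2 * PI)) = eval e X.
Proof.
  induction e; cbn; intros He.
  - apply He.
  - unfold upd. now rewrite (proj2 (Nat.eqb_neq i 1) He).
  - reflexivity.
  - now rewrite IHe1, IHe2 by tauto.
  - now rewrite IHe1, IHe2 by tauto.
Qed.

Fixpoint expr_free (k : nat) (e : expr) : Prop :=
  match e with
  | ECoord i => i <> k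
  | EAdd a b | EMul a b => expr_free k a /\ expr_free k b
  | _ => True
  end.

Lemma eval_upd_free (e : expr) (k : nat) (X : pt) (s : R) :
  (2 <= k)%nat -> expr_free k e -> eval e (upd X k s) = eval e X.
Proof.
  intros Hk. induction e; cbn; intros He.
  - now apply lift2_upd_high.
  - unfold upd. now rewrite (proj2 (Nat.eqb_neq i k) He).
  - reflexivity.
  - now rewrite IHe1, IHe2 by tauto.
  - now rewrite IHe1, IHe2 by tauto.
Qed.

Definition h_dr (j : nat) (X : pt) : R :=
  match j with
  | 0%nat | 2%nat => 2 * X 2%nat
  | 1%nat => 0
  | _ => -10 / X 2%nat ^ 11
  end.

Lemma pd_h (j k : nat) (X : pt) : 0 < X 2%nat ->
  pd (h j) k X = if Nat.eqb k 2 then h_dr j X else 0.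
Proof.
  intros Hr. destruct (Nat.eqb_spec k 2) as [->|Hk].
  - apply pd_eq. unfold is_pderiv, upd.
    destruct j as [|[|[|j]]]; cbn [h h_dr Nat.eqb]; apply is_derive_Reals; auto_derive; try easy; try ring.
    + pose proof (pow_lt _ 10 Hr). lra.
    + field. lra.
  - apply (pd_const _ _ _ (h j X)). intros s.
    destruct j as [|[|[|j]]]; cbn [h]; unfold upd;
      now rewrite ?(proj2 (Nat.eqb_neq 2 k)) by congruence.
Qed.

Lemma pd_metric_comp_h (i j k : nat) (X : pt) : 0 < X 2%nat ->
  pd (metric_comp h i j) k X = if (Nat.eqb i j && Nat.eqb k 2)%bool then h_dr i X else 0.
Proof.
  intros Hr. unfold metric_comp. destruct (Nat.eqb_spec i j) as [->|Hij]; cbn.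
  - now rewrite <- pd_h.
  - now apply (pd_const _ _ _ 0).
Qed.

Lemma vol_density_h (X : pt) : 0 < X 2%nat -> vol_density h X = / X 2%nat ^ 3.
Proof.
  intros Hr. unfold vol_density. cbn [h].
  replace (X 2%nat ^ 2 * 1 * X 2%nat ^ 2 * / X 2%nat ^ 10) with ((/ X 2%nat ^ 3) ^ 2)
    by (field; lra).
  apply sqrt_pow2. left. apply Rinv_0_lt_compat, pow_lt, Hr.
Qed.

Definition vfield_expr (u rho : R -> R -> R) (k : nat) : expr :=
  match k with
  | 0%nat => EFun u
  | 1%nat => EMul (EMul (ECoord 2) (EConst (/ 2))) (EFun (dth u))
  | 2%nat => EFun rho
  | _ => EConst 0
  end.

Lemma vfield_eval (u rho : R -> R -> R) (k : nat) : vfield u rho k = eval (vfield_expr u rho k).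
Proof. now destruct k as [|[|[|k]]]. Qed.

Definition pressure_profile (u rho : R -> R -> R) : expr :=
  EAdd (EMul (EConst (- / 4))
          (EAdd (EFun (dt (dth u)))
             (EAdd (EMul (EFun u) (EFun (dth (dth u))))
                (EMul (EConst (/ 2)) (EMul (EFun (dth u)) (EFun (dth u)))))))
       (EMul (EConst (/ 2)) (EAdd (EMul (EFun u) (EFun u)) (EMul (EFun rho) (EFun rho)))).

Definition pressure_expr (u rho : R -> R -> R) : expr :=
  EMul (EMul (ECoord 2) (ECoord 2)) (pressure_profile u rho).

Definition mom_expr (u : R -> R -> R) : expr :=
  EAdd (EFun u) (EMul (EConst (- / 4)) (EFun (dth (dth u)))).

Lemma mom_eval (u : R -> R -> R) : mom u = eval (mom_expr u).
Proof. apply functional_extensionality; intros X. unfold mom. rewrite !pd_lift2_theta. cbn. ring. Qed.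

Lemma eq_of_diff_eq (A B a b : R) : a = b -> A - B = a - b -> A = B.
Proof. intros Hab E. rewrite Hab, Rminus_diag in E. now apply Rminus_diag_uniq. Qed.

Section Flow.
Variables (T : R) (u rho : R -> R -> R).
Hypothesis u_smooth : smooth2 T u.
Hypothesis rho_smooth : smooth2 T rho.

Lemma pd_vfield (k i : nat) (X : pt) : time_slab T X ->
  pd (vfield u rho k) i X = eval (expr_pd (vfield_expr u rho k) i) X.
Proof.
  intros HX. rewrite vfield_eval. apply (pd_eval T); [|exact HX].
  destruct k as [|[|[|k]]]; cbn; auto using smooth2_dth.
Qed.

Definition material_accel (k : nat) (X : pt) : R :=
  pd (vfield u rho k) 0 X + cov_deriv h (vfield u rho) (vfield u rho) k X.

Ltac expand_material_accel :=
  unfold material_accel, cov_deriv, christoffel, sum4;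
  rewrite !pd_metric_comp_h, !pd_vfield by easy; cbn; rewrite ?pd_lift2_theta.

Lemma material_accel_theta (X : pt) : time_slab T X -> 0 < X 2%nat ->
  material_accel 0 X = lift2 (dt u) X + 2 * lift2 u X * lift2 (dth u) X.
Proof.
  intros Ht Hr. expand_material_accel. field. lra.
Qed.

Lemma material_accel_r (X : pt) : time_slab T X -> 0 < X 2%nat ->
  material_accel 1 X =
  X 2%nat / 2 * (lift2 (dt (dth u)) X + lift2 u X * lift2 (dth (dth u)) X
                 + / 2 * lift2 (dth u) X ^ 2)
  - X 2%nat * (lift2 u X ^ 2 + lift2 rho X ^ 2).
Proof.
  intros Ht Hr. expand_material_accel. field. lra.
Qed.

Lemma material_accel_y (X : pt) : time_slab T X -> 0 < X 2%nat ->
  material_accel 2 X =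
  lift2 (dt rho) X + (lift2 (dth rho) X * lift2 u X + lift2 rho X * lift2 (dth u) X).
Proof.
  intros Ht Hr. expand_material_accel. field. lra.
Qed.

Lemma material_accel_z (X : pt) : time_slab T X -> 0 < X 2%nat -> material_accel 3 X = 0.
Proof.
  intros Ht Hr. expand_material_accel. field. lra.
Qed.

Lemma vfield_div_free (X : pt) : time_slab T X -> 0 < X 2%nat -> div_g h (vfield u rho) X = 0.
Proof.
  intros Ht Hr. unfold div_g, sum4.
  set (c := dth u (X 0%nat) (X 1%nat)).
  assert (D_theta : pd (fun Y => vol_density h Y * vfield u rho 0 Y) 1 X = vol_density h X * c).
  { apply pd_eq.
    change (derivable_pt_lim (fun s => vol_density h X * u (X 0%nat) s) (X 1%nat)
              (vol_density h X * c)).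
    apply (derivable_pt_lim_scal (fun s => u (X 0%nat) s)). now apply (dth_derivable T). }
  assert (D_r : pd (fun Y => vol_density h Y * vfield u rho 1 Y) 2 X = - c / X 2%nat ^ 3).
  { apply pd_eq.
    change (derivable_pt_lim (fun s => vol_density h (upd X 2 s) * (s / 2 * c)) (X 2%nat)
              (- c / X 2%nat ^ 3)).
    apply derivable_pt_lim_locally_ext with
      (f := fun s => / 2 * c * / s ^ 2) (a := 0) (b := X 2%nat + 1); [lra| |].
    - intros s Hs. rewrite vol_density_h, upd_same by (rewrite upd_same; lra). field. lra.
    - apply is_derive_Reals. auto_derive; [nra | field; lra]. }
  assert (D_y : pd (fun Y => vol_density h Y * vfield u rho 2 Y) 3 X = 0)
    by now apply (pd_const _ _ _ (vol_density h X * rho (X 0%nat) (X 1%nat))).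
  assert (D_z : pd (fun Y => vol_density h Y * vfield u rho 3 Y) 4 X = 0)
    by now apply (pd_const _ _ _ (vol_density h X * 0)).
  rewrite D_theta, D_r, D_y, D_z, vol_density_h by exact Hr. field. lra.
Qed.

Lemma pressure_expr_smooth : expr_smooth T (pressure_expr u rho).
Proof. cbn. auto 10 using smooth2_dt, smooth2_dth. Qed.

Lemma euler_theta (X : pt) : time_slab T X -> 0 < X 2%nat ->
  pd (mom u) 0 X + lift2 u X * pd (mom u) 1 X + 2 * mom u X * pd (lift2 u) 1 X
    = - (lift2 rho X * pd (lift2 rho) 1 X) ->
  material_accel 0 X = - grad h (eval (pressure_expr u rho)) 0 X.
Proof.
  intros Ht Hr Hm. rewrite material_accel_theta by easy. unfold grad.
  rewrite mom_eval, !(pd_eval T), !pd_lift2_theta in Hm by (cbn; auto using smooth2_dth).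
  rewrite (pd_eval T) by (exact pressure_expr_smooth || easy).
  cbn in Hm |- *. unfold lift2 in *.
  rewrite (dt_dth_comm T (dth u)) by (auto using smooth2_dth).
  apply (eq_of_diff_eq _ _ _ _ Hm). field. lra.
Qed.

Lemma euler_r (X : pt) : time_slab T X -> 0 < X 2%nat ->
  material_accel 1 X = - grad h (eval (pressure_expr u rho)) 1 X.
Proof.
  intros Ht Hr. rewrite material_accel_r by easy. unfold grad.
  rewrite (pd_eval T) by (exact pressure_expr_smooth || easy).
  cbn. field.
Qed.

Lemma euler_y (X : pt) : time_slab T X -> 0 < X 2%nat ->
  pd (lift2 rho) 0 X + pd (fun Y => lift2 rho Y * lift2 u Y) 1 X = 0 ->
  material_accel 2 X = - grad h (eval (pressure_expr u rho)) 2 X.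
Proof.
  intros Ht Hr Hc.
  change (pd (eval (EFun rho)) 0 X + pd (eval (EMul (EFun rho) (EFun u))) 1 X = 0) in Hc.
  rewrite !(pd_eval T) in Hc by (cbn; auto). cbn in Hc.
  rewrite material_accel_y by easy. unfold grad.
  rewrite (pd_eval T) by (exact pressure_expr_smooth || easy).
  cbn. rewrite Hc. field. lra.
Qed.

Lemma euler_z (X : pt) : time_slab T X -> 0 < X 2%nat ->
  material_accel 3 X = - grad h (eval (pressure_expr u rho)) 3 X.
Proof.
  intros Ht Hr. rewrite material_accel_z by easy. unfold grad.
  rewrite (pd_eval T) by (exact pressure_expr_smooth || easy).
  cbn. field. lra.
Qed.
End Flow.

Lemma pressure_expr_theta_periodic (u rho : R -> R -> R) :
  theta_periodic u -> theta_periodic rho -> expr_theta_periodic (pressure_expr u rho).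
Proof.
  intros Pu Pr. cbn.
  repeat split; auto using theta_periodic_dt, theta_periodic_dth.
Qed.

Lemma pressure_expr_free (u rho : R -> R -> R) (k : nat) :
  (3 <= k)%nat -> expr_free k (pressure_expr u rho).
Proof. intros Hk. cbn. repeat split; lia. Qed.

Theorem corollary4p2 (T : R) (u rho : R -> R -> R) :
  0 < T ->
  (forall t th, u t (th + 2 * PI) = u t th) ->
  (forall t th, rho t (th + 2 * PI) = rho t th) ->
  smooth_on 2 (fun X => 0 < X 0%nat < T) (lift2 u) ->
  smooth_on 2 (fun X => 0 < X 0%nat < T) (lift2 rho) ->
  (forall X, 0 < X 0%nat < T ->
     pd (mom u) 0 X + lift2 u X * pd (mom u) 1 X
       + 2 * mom u X * pd (lift2 u) 1 X
     = - (lift2 rho X * pd (lift2 rho) 1 X)) ->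
  (forall X, 0 < X 0%nat < T ->
     pd (lift2 rho) 0 X + pd (fun Y => lift2 rho Y * lift2 u Y) 1 X = 0) ->
  exists p : pt -> R,
    smooth_on 5 (fun X => 0 < X 0%nat < T /\ 0 < X 2%nat) p /\
    (forall X, p (upd X 1 (X 1%nat + 2 * PI)) = p X) /\
    (forall X, p (upd X 3 (X 3%nat + 1)) = p X) /\
    (forall X, p (upd X 4 (X 4%nat + 2 * PI)) = p X) /\
    (forall X, 0 < X 0%nat < T -> 0 < X 2%nat ->
       (forall k, (k < 4)%nat ->
          pd (vfield u rho k) 0 X + cov_deriv h (vfield u rho) (vfield u rho) k X
          = - grad h p k X) /\
       div_g h (vfield u rho) X = 0).
Proof.
  intros _ Pu Pr Su Srho Hmom Hcont.
  exists (eval (pressure_expr u rho)). split; [|split; [|split; [|split]]].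
  - apply (smooth_on_eval T); [lia | now intros X [] | exact (pressure_expr_smooth T u rho Su Srho)].
  - intros X. now apply eval_theta_periodic, pressure_expr_theta_periodic.
  - intros X. apply eval_upd_free, pressure_expr_free; lia.
  - intros X. apply eval_upd_free, pressure_expr_free; lia.
  - intros X Ht Hr. split; [|exact (vfield_div_free T u rho Su X Ht Hr)].
    intros k Hk. destruct k as [|[|[|[|k]]]]; [| | | |lia].
    + exact (euler_theta T u rho Su Srho X Ht Hr (Hmom X Ht)).
    + exact (euler_r T u rho Su Srho X Ht Hr).
    + exact (euler_y T u rho Su Srho X Ht Hr (Hcont X Ht)).
    + exact (euler_z T u rho Su Srho X Ht Hr).
Qed.
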